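(* Let $\mathbf{L}\in\{\mathbf{K}_D,\mathbf{KD}_D,\mathbf{KT}_D\}$. The cut rule is admissible in $\mathsf{G}(\mathbf{L})$: for all finite multisets $\Gamma,\Delta,\Gamma',\Delta'$ and every formula $\lambda$, if $\mathsf{G}(\mathbf{L})\vdash\Gamma\Rightarrow\Delta,\lambda$ and $\mathsf{G}(\mathbf{L})\vdash\lambda,\Gamma'\Rightarrow\Delta'$, then $\mathsf{G}(\mathbf{L})\vdash\Gamma,\Gamma'\Rightarrow\Delta,\Delta'$.
   Context: Language: fix a finite nonempty set $\mathsf{Agt}$ of agents and a countable set $\mathsf{Prop}$ of propositional variables; $\mathsf{Grp}$ is the set of nonempty subsets of $\mathsf{Agt}$. Formulas: $\alpha::=p\mid\bot\mid\alpha\wedge\alpha\mid\alpha\vee\alpha\mid\alpha\rightarrow\alpha\mid\neg\alpha\mid D_G\alpha$ ($p\in\mathsf{Prop}$, $G\in\mathsf{Grp}$). Outmost-boxed formula: one of the form $D_G\gamma$. Sequent calculi (sequents $\Gamma\Rightarrow\Delta$ are pairs of finite multisets; derivable = root of a finite tree built from initial sequents by rules): $\mathsf{G}(\mathbf{K}_D)$ has initial sequents $\Gamma,p\Rightarrow p,\Delta$ ($p\in\mathsf{Prop}$) and $\bot,\Gamma\Rightarrow\Delta$; rules $(R\wedge)$ from $\Gamma\Rightarrow\Delta,\alpha_1$ and $\Gamma\Rightarrow\Delta,\alpha_2$ infer $\Gamma\Rightarrow\Delta,\alpha_1\wedge\alpha_2$; $(L\wedge)$ from $\alpha_1,\alpha_2,\Gamma\Rightarrow\Delta$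 infer $\alpha_1\wedge\alpha_2,\Gamma\Rightarrow\Delta$; $(R\vee)$ from $\Gamma\Rightarrow\Delta,\alpha_1,\alpha_2$ infer $\Gamma\Rightarrow\Delta,\alpha_1\vee\alpha_2$; $(L\vee)$ from $\alpha_1,\Gamma\Rightarrow\Delta$ and $\alpha_2,\Gamma\Rightarrow\Delta$ infer $\alpha_1\vee\alpha_2,\Gamma\Rightarrow\Delta$; $(R\rightarrow)$ from $\alpha_1,\Gamma\Rightarrow\Delta,\alpha_2$ infer $\Gamma\Rightarrow\Delta,\alpha_1\rightarrow\alpha_2$; $(L\rightarrow)$ from $\Gamma\Rightarrow\Delta,\alpha_1$ and $\alpha_2,\Gamma\Rightarrow\Delta$ infer $\alpha_1\rightarrow\alpha_2,\Gamma\Rightarrow\Delta$; $(R\neg)$ from $\alpha,\Gamma\Rightarrow\Delta$ infer $\Gamma\Rightarrow\Delta,\neg\alpha$; $(L\neg)$ from $\Gamma\Rightarrow\Delta,\alpha$ infer $\neg\alpha,\Gamma\Rightarrow\Delta$; $(D_K)$: from $\alpha_1,\dots,\alpha_n\Rightarrow\beta$ ($n\ge0$) infer $\Sigma,D_{G_1}\alpha_1,\dots,D_{G_n}\alpha_n\Rightarrow D_G\beta,\Omega$ where all $G_i\subseteq G$, $\Sigma$ consists only of propositional variables, $\bot$, and $D_H\gamma$ with $H\not\subseteq G$, and $\Omega$ only of propositional variables, $\bot$, outmost-boxed formulas. $\mathsf{G}(\mathbf{KD}_D)$ adds $(D_D)$: from $\Gamma\Rightarrow$ with $\Gamma\neq\emptyset$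 infer $\Sigma,D_{\{a\}}\Gamma\Rightarrow\Omega$ ($a\in\mathsf{Agt}$, $D_{\{a\}}\Gamma=\{D_{\{a\}}\gamma:\gamma\in\Gamma\}$), $\Sigma$ only propositional variables, $\bot$, $D_H\gamma$ with $H\neq\{a\}$; $\Omega$ only propositional variables, $\bot$, outmost-boxed formulas. $\mathsf{G}(\mathbf{KT}_D)$ adds to $\mathsf{G}(\mathbf{K}_D)$ $(D_T)$: from $D_G\alpha,\alpha,\Gamma\Rightarrow\Delta$ infer $D_G\alpha,\Gamma\Rightarrow\Delta$. *)

From mathcomp Require Import all_boot.
From Stdlib Require Import List Permutation.
Set Implicit Arguments. Unset Strict Implicit. Unset Printing Implicit Defensive.

Definition grp (Agt : finType) := {G : {set Agt} | G != set0}.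

Inductive form (V : Type) (Agt : finType) : Type :=
| Var : V -> form V Agt
| Bot : form V Agt
| And : form V Agt -> form V Agt -> form V Agt
| Or  : form V Agt -> form V Agt -> form V Agt
| Imp : form V Agt -> form V Agt -> form V Agt
| Neg : form V Agt -> form V Agt
| Dbox : grp Agt -> form V Agt -> form V Agt.
Arguments Var {V Agt}. Arguments Bot {V Agt}. Arguments And {V Agt}. Arguments Or {V Agt}. Arguments Imp {V Agt}. Arguments Neg {V Agt}. Arguments Dbox {V Agt}.

Section Calculus.
Variables (V : Type) (Agt : finType).
Notation form := (form V Agt).

Definition sigmaK (G : grp Agt) (f : form) : Prop :=
  match f with
  | Var _ | Bot => True
  | Dbox H _ => ~~ (val H \subset val G)
  | _ => False
  end.
Definition sigmaD (a : Agt) (f : form) : Prop :=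
  match f with
  | Var _ | Bot => True
  | Dbox H _ => val H != [set a]
  | _ => False
  end.
Definition omegaOK (f : form) : Prop :=
  match f with
  | Var _ | Bot | Dbox _ _ => True
  | _ => False
  end.

Inductive logic := LK | LKD | LKT.

(* Sequents Gamma => Delta are pairs of finite multisets, represented as lists
   taken up to permutation (rule [d_perm]). *)
Inductive derivable (L : logic) : list form -> list form -> Prop :=
| d_perm Γ Δ Γ' Δ' : Permutation Γ Γ' -> Permutation Δ Δ' ->
    derivable L Γ Δ -> derivable L Γ' Δ'
| d_init p Γ Δ : derivable L (Var p :: Γ) (Var p :: Δ)
| d_bot Γ Δ : derivable L (Bot :: Γ) Δ
| d_Rand Γ Δ a1 a2 : derivable L Γ (a1 :: Δ) -> derivable L Γ (a2 :: Δ) ->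
    derivable L Γ (And a1 a2 :: Δ)
| d_Land Γ Δ a1 a2 : derivable L (a1 :: a2 :: Γ) Δ ->
    derivable L (And a1 a2 :: Γ) Δ
| d_Ror Γ Δ a1 a2 : derivable L Γ (a1 :: a2 :: Δ) ->
    derivable L Γ (Or a1 a2 :: Δ)
| d_Lor Γ Δ a1 a2 : derivable L (a1 :: Γ) Δ -> derivable L (a2 :: Γ) Δ ->
    derivable L (Or a1 a2 :: Γ) Δ
| d_Rimp Γ Δ a1 a2 : derivable L (a1 :: Γ) (a2 :: Δ) ->
    derivable L Γ (Imp a1 a2 :: Δ)
| d_Limp Γ Δ a1 a2 : derivable L Γ (a1 :: Δ) -> derivable L (a2 :: Γ) Δ ->
    derivable L (Imp a1 a2 :: Γ) Δ
| d_Rneg Γ Δ a : derivable L (a :: Γ) Δ -> derivable L Γ (Neg a :: Δ)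
| d_Lneg Γ Δ a : derivable L Γ (a :: Δ) -> derivable L (Neg a :: Γ) Δ
| d_DK (l : list (grp Agt * form)) (G : grp Agt) (b : form) (Σ Ω : list form) :
    derivable L (map snd l) [:: b] ->
    (forall Ha, In Ha l -> val Ha.1 \subset val G) ->
    (forall f, In f Σ -> sigmaK G f) ->
    (forall f, In f Ω -> omegaOK f) ->
    derivable L (Σ ++ map (fun Ha => Dbox Ha.1 Ha.2) l) (Dbox G b :: Ω)
| d_DD (a : Agt) (Ga : grp Agt) (Γ Σ Ω : list form) :
    L = LKD ->
    val Ga = [set a] ->
    Γ <> [::] ->
    derivable L Γ [::] ->
    (forall f, In f Σ -> sigmaD a f) ->
    (forall f, In f Ω -> omegaOK f) ->
    derivable L (Σ ++ map (Dbox Ga) Γ) Ω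
| d_DT (G : grp Agt) a Γ Δ :
    L = LKT ->
    derivable L (Dbox G a :: a :: Γ) Δ ->
    derivable L (Dbox G a :: Γ) Δ.

End Calculus.

(* Cut is eliminated by induction on the cut formula. Weakening and contraction
   are admissible and the propositional rules are invertible, so a cut on a
   compound formula splits into cuts on its immediate subformulas. A cut on a
   variable, on falsum or on a boxed formula is permuted upwards in the left
   derivation until the cut formula is principal there. If it is principal in
   (D_K), the cut is then permuted upwards in the right derivation until the box
   is principal there too: against (D_K) or (D_D) the two modal inferences merge
   into one whose premise comes from a cut on the unboxed formula, and against
   (D_T) the cut becomes one on the unboxed formula, after which (D_T) absorbs the
   unboxed side formulas. *)

From mathcomp Require Import all_boot zify.
From Stdlib Require Import List Permutation Lia.
Set Implicit Arguments. Unset Strict Implicit.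
Local Open Scope seq_scope.

(* Under [seq_scope], [++] is [cat], which Stdlib's lemmas about [app] only
   match up to conversion. *)
Lemma In_cat (T : Type) (x : T) l m : In x (l ++ m) <-> In x l \/ In x m.
Proof. exact: in_app_iff. Qed.

Lemma map_cat_list (T U : Type) (h : T -> U) (l m : list T) :
  map h (l ++ m) = map h l ++ map h m.
Proof. exact: map_app. Qed.

Lemma Permutation_middle_cat (T : Type) (x : T) l m :
  Permutation (l ++ x :: m) (x :: l ++ m).
Proof. exact: Permutation_sym (Permutation_middle l m x). Qed.

Lemma In_Permutation_cons (T : Type) (x : T) l :
  In x l -> exists m, Permutation l (x :: m).
Proof.
move=> xl; have [l1 [l2 ->]] := in_split x l xl.
by exists (l1 ++ l2); apply: Permutation_middle_cat.
Qed.

Lemma Permutation_cons_In (T : Type) (x f : T) l m :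
  Permutation l (x :: m) -> In f m -> In f l.
Proof. by move=> P fm; apply: Permutation_in (Permutation_sym P) (or_intror fm). Qed.

Lemma Permutation_app_disjoint (T : Type) (c R Γ Γ0 : list T) :
  (forall x, In x R -> ~ In x c) -> Permutation (c ++ Γ) (R ++ Γ0) ->
  exists m, Permutation Γ (R ++ m) /\ Permutation Γ0 (c ++ m).
Proof.
elim: R Γ Γ0 => [|y R IH] Γ Γ0 disj P.
  by exists Γ; split; [|apply: Permutation_sym].
have : In y (c ++ Γ) by apply: Permutation_in (Permutation_sym P) (or_introl erefl).
move/In_cat => [yc|yΓ]; first by case: (disj y (or_introl erefl)).
have [Γ1 PΓ] := In_Permutation_cons yΓ.
have P' : Permutation (c ++ Γ1) (R ++ Γ0).
  apply: (@Permutation_cons_inv _ _ _ y); apply: Permutation_trans P.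
  apply: Permutation_trans (Permutation_sym (Permutation_middle_cat _ _ _)) _.
  exact: (Permutation_app_head c (Permutation_sym PΓ)).
have [m [Pm1 Pm2]] := IH _ _ (fun x xR => disj x (or_intror xR)) P'.
by exists m; split=> //; apply: Permutation_trans PΓ _; apply: Permutation_cons.
Qed.

Lemma Permutation_cons_cons_inv (T : Type) (x y : T) l l' :
  Permutation (x :: l) (y :: l') ->
  x = y /\ Permutation l l' \/
  exists m, Permutation l (y :: m) /\ Permutation l' (x :: m).
Proof.
move=> P; have : x = y \/ In y l.
  exact: Permutation_in (Permutation_sym P) (or_introl erefl).
case=> [exy|yl]; first by subst y; left; split; last exact: Permutation_cons_inv P.
have [m Pm] := In_Permutation_cons yl.
right; exists m; split=> //; apply: (@Permutation_cons_inv _ _ _ y).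
apply: Permutation_trans (Permutation_sym P) _; apply: Permutation_trans (perm_swap _ _ _).
exact: Permutation_cons.
Qed.

Section Cut.

Variables (V : countType) (Agt : finType) (L : logic).
Notation form := (form V Agt).
Notation der := (derivable L).
Notation boxes l := (map (fun Ha : grp Agt * form => Dbox Ha.1 Ha.2) l).
Implicit Types (Γ Δ X Y Σ Ω : list form) (A B b f : form) (G H : grp Agt)
  (l : list (grp Agt * form)).

Definition form_eq_dec (x y : form) : {x = y} + {x <> y}.
Proof. decide equality; exact: eq_comparable. Defined.

Lemma count_occ_cons_add (x y : form) (l : list form) :
  count_occ form_eq_dec (y :: l) x
  = (if form_eq_dec y x then 1 else 0) + count_occ form_eq_dec l x.
Proof. by rewrite /=; case: form_eq_dec. Qed.

Lemma count_occ_cat (x : form) (l m : list form) :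
  count_occ form_eq_dec (l ++ m) x
  = count_occ form_eq_dec l x + count_occ form_eq_dec m x.
Proof. exact: count_occ_app. Qed.

Ltac count_simpl :=
  rewrite ?map_cat_list ?map_app; cbn [map fst snd];
  repeat progress rewrite ?count_occ_cat ?count_occ_app ?count_occ_cons_add ?count_occ_nil.

Ltac perm_solve :=
  let x := fresh "x" in
  apply/(Permutation_count_occ form_eq_dec) => x;
  repeat match goal with H : Permutation _ _ |- _ =>
    move/(Permutation_count_occ form_eq_dec)/(_ x): H; count_simpl => H end;
  count_simpl; lia.

Ltac from_perm D := apply: (d_perm _ _ D); perm_solve.

Definition sequent := (list form * list form)%type.

(* A context-sharing rule with active parts [ps] and [c]: its instance for the
   context [Γ ⇒ Δ] has premises [s.1 ++ Γ ⇒ s.2 ++ Δ] (s in ps) and conclusion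
   [c.1 ++ Γ ⇒ c.2 ++ Δ]. *)
Inductive shared_rule : list sequent -> sequent -> Prop :=
| r_Rand a1 a2 : shared_rule [:: ([::], [:: a1]); ([::], [:: a2])] ([::], [:: And a1 a2])
| r_Land a1 a2 : shared_rule [:: ([:: a1; a2], [::])] ([:: And a1 a2], [::])
| r_Ror a1 a2 : shared_rule [:: ([::], [:: a1; a2])] ([::], [:: Or a1 a2])
| r_Lor a1 a2 : shared_rule [:: ([:: a1], [::]); ([:: a2], [::])] ([:: Or a1 a2], [::])
| r_Rimp a1 a2 : shared_rule [:: ([:: a1], [:: a2])] ([::], [:: Imp a1 a2])
| r_Limp a1 a2 : shared_rule [:: ([::], [:: a1]); ([:: a2], [::])] ([:: Imp a1 a2], [::])
| r_Rneg a : shared_rule [:: ([:: a], [::])] ([::], [:: Neg a])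
| r_Lneg a : shared_rule [:: ([::], [:: a])] ([:: Neg a], [::])
| r_DT G a : L = LKT -> shared_rule [:: ([:: Dbox G a; a], [::])] ([:: Dbox G a], [::]).

Lemma der_shared_rule ps c Γ Δ : shared_rule ps c ->
  (forall s, In s ps -> der (s.1 ++ Γ) (s.2 ++ Δ)) -> der (c.1 ++ Γ) (c.2 ++ Δ).
Proof.
case=> [a1 a2|a1 a2|a1 a2|a1 a2|a1 a2|a1 a2|a|a|G a LT] prem;
  have p1 := prem _ (or_introl erefl);
  try have p2 := prem _ (or_intror (or_introl erefl));
  [exact: d_Rand p1 p2|exact: d_Land p1|exact: d_Ror p1|exact: d_Lor p1 p2
  |exact: d_Rimp p1|exact: d_Limp p1 p2|exact: d_Rneg p1|exact: d_Lneg p1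
  |exact: d_DT LT p1].
Qed.

Lemma derivable_shared_ind (P : list form -> list form -> Prop) :
  (forall Γ Δ Γ' Δ', Permutation Γ Γ' -> Permutation Δ Δ' -> P Γ Δ -> P Γ' Δ') ->
  (forall p Γ Δ, P (Var p :: Γ) (Var p :: Δ)) ->
  (forall Γ Δ, P (Bot :: Γ) Δ) ->
  (forall ps c Γ Δ, shared_rule ps c ->
    (forall s, In s ps -> der (s.1 ++ Γ) (s.2 ++ Δ) /\ P (s.1 ++ Γ) (s.2 ++ Δ)) ->
    P (c.1 ++ Γ) (c.2 ++ Δ)) ->
  (forall l G b Σ Ω, der (map snd l) [:: b] ->
    (forall Ha, In Ha l -> val Ha.1 \subset val G) ->
    (forall f, In f Σ -> sigmaK G f) -> (forall f, In f Ω -> omegaOK f) ->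
    P (Σ ++ boxes l) (Dbox G b :: Ω)) ->
  (forall a Ga Γ Σ Ω, L = LKD -> val Ga = [set a] -> Γ <> [::] -> der Γ [::] ->
    (forall f, In f Σ -> sigmaD a f) -> (forall f, In f Ω -> omegaOK f) ->
    P (Σ ++ map (Dbox Ga) Γ) Ω) ->
  forall Γ Δ, der Γ Δ -> P Γ Δ.
Proof.
move=> Pperm Pinit Pbot Prule PDK PDD Γ Δ; elim=> {Γ Δ}.
- by move=> Γ Δ Γ' Δ' ? ? _; apply: Pperm.
- exact: Pinit.
- exact: Pbot.
- move=> Γ Δ a1 a2 D1 P1 D2 P2; apply: (Prule _ _ _ _ (r_Rand a1 a2)).
  by move=> s /= [<-|[<-|[]]].
- move=> Γ Δ a1 a2 D1 P1; apply: (Prule _ _ _ _ (r_Land a1 a2)).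
  by move=> s /= [<-|[]].
- move=> Γ Δ a1 a2 D1 P1; apply: (Prule _ _ _ _ (r_Ror a1 a2)).
  by move=> s /= [<-|[]].
- move=> Γ Δ a1 a2 D1 P1 D2 P2; apply: (Prule _ _ _ _ (r_Lor a1 a2)).
  by move=> s /= [<-|[<-|[]]].
- move=> Γ Δ a1 a2 D1 P1; apply: (Prule _ _ _ _ (r_Rimp a1 a2)).
  by move=> s /= [<-|[]].
- move=> Γ Δ a1 a2 D1 P1 D2 P2; apply: (Prule _ _ _ _ (r_Limp a1 a2)).
  by move=> s /= [<-|[<-|[]]].
- move=> Γ Δ a D1 P1; apply: (Prule _ _ _ _ (r_Rneg a)).
  by move=> s /= [<-|[]].
- move=> Γ Δ a D1 P1; apply: (Prule _ _ _ _ (r_Lneg a)).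
  by move=> s /= [<-|[]].
- by move=> l G b Σ Ω D _; apply: PDK.
- by move=> a Ga Γ Σ Ω LD Ga1 ne D _; apply: PDD.
- move=> G a Γ Δ LT D1 P1; apply: (Prule _ _ _ _ (r_DT G a LT)).
  by move=> s /= [<-|[]].
Qed.

Lemma shared_rule_principalL ps c A :
  shared_rule ps c -> In A c.1 -> c = ([:: A], [::]).
Proof. by case=> [? ?|? ?|? ?|? ?|? ?|? ?|?|?|? ? ?] //= [<-|[]]. Qed.

Lemma shared_rule_principalR ps c A :
  shared_rule ps c -> In A c.2 -> c = ([::], [:: A]).
Proof. by case=> [? ?|? ?|? ?|? ?|? ?|? ?|?|?|? ? ?] //= [<-|[]]. Qed.

Lemma shared_rule_principalR_compound ps c A :
  shared_rule ps c -> In A c.2 -> ~ omegaOK A.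
Proof. by case=> [? ?|? ?|? ?|? ?|? ?|? ?|?|?|? ? ?] //= [<-|[]]. Qed.

Lemma shared_rule_principalL_omega ps c A :
  shared_rule ps c -> In A c.1 -> omegaOK A ->
  exists G a, [/\ L = LKT, A = Dbox G a & ps = [:: ([:: A; a], [::])]].
Proof. by case=> [? ?|? ?|? ?|? ?|? ?|? ?|?|?|G a LT] //= [<-|[]] // []; exists G, a. Qed.

Lemma shared_rule_functional ps ps' c :
  shared_rule ps c -> shared_rule ps' c -> ps = ps'.
Proof. by case=> [? ?|? ?|? ?|? ?|? ?|? ?|?|?|? ? ?]; inversion 1. Qed.

Lemma shared_rule_principal ps c :
  shared_rule ps c -> exists A, c = ([:: A], [::]) \/ c = ([::], [:: A]).
Proof. by case=> [a1 a2|a1 a2|a1 a2|a1 a2|a1 a2|a1 a2|a|a|G a _]; eexists; auto. Qed.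

(* Weakening, contraction, inversion and both halves of cut elimination are
   instances of [der_replaceable] below. *)
Definition replaceable R S X Y Γ Δ : Prop :=
  forall Γ0 Δ0, Permutation Γ (R ++ Γ0) -> Permutation Δ (S ++ Δ0) ->
  der (X ++ Γ0) (Y ++ Δ0).

Section Replacement.

Variables R S X Y : list form.
Notation rep := (replaceable R S X Y).

Lemma replaceable_shared_rule ps c Γ Δ : shared_rule ps c ->
  (forall f, In f R -> ~ In f c.1) -> (forall f, In f S -> ~ In f c.2) ->
  (forall s, In s ps -> rep (s.1 ++ Γ) (s.2 ++ Δ)) -> rep (c.1 ++ Γ) (c.2 ++ Δ).
Proof.
move=> r dR dS IH Γ0 Δ0 /(Permutation_app_disjoint dR) [m [Pm1 Pm2]].
move/(Permutation_app_disjoint dS) => [n [Pn1 Pn2]].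
have D : der (c.1 ++ X ++ m) (c.2 ++ Y ++ n).
  apply: der_shared_rule r _ => s /IH rep_s.
  have D : der (X ++ s.1 ++ m) (Y ++ s.2 ++ n) by apply: rep_s; perm_solve.
  from_perm D.
from_perm D.
Qed.

Hypothesis init_principal :
  forall p Γ Δ, In (Var p) (R ++ S) -> rep (Var p :: Γ) (Var p :: Δ).
Hypothesis bot_principal : forall Γ Δ, In Bot R -> rep (Bot :: Γ) Δ.
Hypothesis shared_principalL : forall ps A Γ Δ,
  shared_rule ps ([:: A], [::]) -> In A R ->
  (forall s, In s ps -> der (s.1 ++ Γ) (s.2 ++ Δ) /\ rep (s.1 ++ Γ) (s.2 ++ Δ)) ->
  rep (A :: Γ) Δ.
Hypothesis shared_principalR : forall ps A Γ Δ,
  shared_rule ps ([::], [:: A]) -> In A S ->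
  (forall s, In s ps -> der (s.1 ++ Γ) (s.2 ++ Δ) /\ rep (s.1 ++ Γ) (s.2 ++ Δ)) ->
  rep Γ (A :: Δ).
Hypothesis DK_case : forall l G b Σ Ω, der (map snd l) [:: b] ->
  (forall Ha, In Ha l -> val Ha.1 \subset val G) ->
  (forall f, In f Σ -> sigmaK G f) -> (forall f, In f Ω -> omegaOK f) ->
  rep (Σ ++ boxes l) (Dbox G b :: Ω).
Hypothesis DD_case : forall a Ga Γ Σ Ω, L = LKD -> val Ga = [set a] ->
  Γ <> [::] -> der Γ [::] ->
  (forall f, In f Σ -> sigmaD a f) -> (forall f, In f Ω -> omegaOK f) ->
  rep (Σ ++ map (Dbox Ga) Γ) Ω.

Lemma der_replaceable Γ Δ : der Γ Δ -> rep Γ Δ.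
Proof.
move: Γ Δ; apply: derivable_shared_ind => //.
- move=> Γ Δ Γ' Δ' PΓ PΔ rep_ΓΔ Γ0 Δ0 PΓ0 PΔ0.
  by apply: rep_ΓΔ; [exact: Permutation_trans PΓ PΓ0|exact: Permutation_trans PΔ PΔ0].
- move=> p Γ Δ; case: (In_dec form_eq_dec (Var p) (R ++ S)) => [|pRS].
    exact: init_principal.
  have [dR dS] : (forall f, In f R -> ~ In f [:: Var p]) /\
                 (forall f, In f S -> ~ In f [:: Var p]).
    by split=> f fRS /= [fp|//]; apply: pRS; apply/In_cat; subst f; tauto.
  move=> Γ0 Δ0 /(Permutation_app_disjoint dR) [m [_ Pm]].
  move/(Permutation_app_disjoint dS) => [n [_ Pn]].
  from_perm (d_init L p (X ++ m) (Y ++ n)).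
- move=> Γ Δ; case: (In_dec form_eq_dec Bot R) => [|botR]; first exact: bot_principal.
  have dR : forall f, In f R -> ~ In f [:: Bot] by move=> f fR /= [fb|//]; subst f.
  move=> Γ0 Δ0 /(Permutation_app_disjoint dR) [m [_ Pm]] _.
  from_perm (d_bot L (X ++ m) (Y ++ Δ0)).
- move=> ps c Γ Δ r IH; have [A [ec|ec]] := shared_rule_principal r; subst c.
  + case: (In_dec form_eq_dec A R) => [AR|AR]; first exact: shared_principalL r AR IH.
    apply: (replaceable_shared_rule r) => /= [f fR [fA|//]|f _ //|s /IH[]//].
    by subst f.
  + case: (In_dec form_eq_dec A S) => [AS|AS]; first exact: shared_principalR r AS IH.
    apply: (replaceable_shared_rule r) => /= [f _ //|f fS [fA|//]|s /IH[]//].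
    by subst f.
Qed.

End Replacement.

Lemma omegaOK_DK_context G l Σ f : (forall f, In f Σ -> sigmaK G f) ->
  In f (Σ ++ boxes l) -> omegaOK f.
Proof. by move=> HΣ /In_cat[/HΣ|/in_map_iff[Ha [<- _]]]; case: f. Qed.

Lemma omegaOK_DD_context a Ga Γ Σ f : (forall f, In f Σ -> sigmaD a f) ->
  In f (Σ ++ map (Dbox Ga) Γ) -> omegaOK f.
Proof. by move=> HΣ /In_cat[/HΣ|/in_map_iff[g [<- _]]]; case: f. Qed.

Definition weakenable X Y := forall Γ Δ, der Γ Δ -> der (X ++ Γ) (Y ++ Δ).

Lemma weakenableR_omega A : omegaOK A -> weakenable [::] [:: A].
Proof.
move=> omA Γ Δ D.
suff rep : replaceable [::] [::] [::] [:: A] Γ Δ by exact: rep.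
apply: der_replaceable D => [p ? ? []|? ? []|? ? ? ? _ []|? ? ? ? _ []||].
- move=> l G b Σ Ω Dp lG HΣ HΩ Γ0 Δ0 PΓ PΔ.
  have D := d_DK (Ω := A :: Ω) Dp lG HΣ (fun f => ltac:(by case=> [<-|/HΩ])).
  from_perm D.
- move=> a Ga Γd Σ Ω LD Ga1 ne Dp HΣ HΩ Γ0 Δ0 PΓ PΔ.
  have D := d_DD (Ω := A :: Ω) LD Ga1 ne Dp HΣ (fun f => ltac:(by case=> [<-|/HΩ])).
  from_perm D.
Qed.

Lemma weakenableL_omega A : omegaOK A ->
  (forall H g, A = Dbox H g -> weakenable [:: g] [::]) -> weakenable [:: A] [::].
Proof.
move=> omA wk_g Γ Δ D.
suff rep : replaceable [::] [::] [:: A] [::] Γ Δ by exact: rep.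
apply: der_replaceable D => [p ? ? []|? ? []|? ? ? ? _ []|? ? ? ? _ []||].
- move=> l G b Σ Ω Dp lG HΣ HΩ Γ0 Δ0 PΓ PΔ.
  suff into_Σ : sigmaK G A -> der (A :: Γ0) Δ0.
    case: A omA wk_g into_Σ => [p| |? ?|? ?|? ?|?|H g] //= _ wk_g into_Σ;
      try by apply: into_Σ.
    case: (boolP (val H \subset val G)) => HG; last exact: into_Σ.
    have D := d_DK (l := (H, g) :: l) (G := G) (wk_g H g erefl _ _ Dp)
      (fun Ha => ltac:(by case=> [<-//|/lG])) HΣ HΩ.
    from_perm D.
  move=> sA; have D := d_DK (Σ := A :: Σ) Dp lG (fun f => ltac:(by case=> [<-|/HΣ])) HΩ.
  from_perm D.
- move=> a Ga Γd Σ Ω LD Ga1 ne Dp HΣ HΩ Γ0 Δ0 PΓ PΔ.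
  suff into_Σ : sigmaD a A -> der (A :: Γ0) Δ0.
    case: A omA wk_g into_Σ => [p| |? ?|? ?|? ?|?|H g] //= _ wk_g into_Σ;
      try by apply: into_Σ.
    case: (eqVneq H Ga) => [eHGa|HGa]; last by apply: into_Σ; rewrite -Ga1 val_eqE.
    subst H.
    have D := d_DD (Γ := g :: Γd) LD Ga1 ltac:(by []) (wk_g Ga g erefl _ _ Dp) HΣ HΩ.
    from_perm D.
  move=> sA.
  have D := d_DD (Σ := A :: Σ) LD Ga1 ne Dp (fun f => ltac:(by case=> [<-|/HΣ])) HΩ.
  from_perm D.
Qed.

Lemma weakenable_formula A : weakenable [:: A] [::] /\ weakenable [::] [:: A].
Proof.
elim: A => [p| |a [wLa wRa] b [wLb wRb]|a [wLa wRa] b [wLb wRb]|a [wLa wRa] b [wLb wRb]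
           |a [wLa wRa]|H g [wLg _]].
- by split; [apply: weakenableL_omega => // ? ? []|exact: weakenableR_omega].
- by split; [move=> Γ Δ _; apply: d_bot|exact: weakenableR_omega].
- split=> Γ Δ D; first exact: d_Land (wLa _ _ (wLb _ _ D)).
  exact: d_Rand (wRa _ _ D) (wRb _ _ D).
- split=> Γ Δ D; first exact: d_Lor (wLa _ _ D) (wLb _ _ D).
  exact: d_Ror (wRa _ _ (wRb _ _ D)).
- split=> Γ Δ D; first exact: d_Limp (wRa _ _ D) (wLb _ _ D).
  exact: d_Rimp (wLa _ _ (wRb _ _ D)).
- by split=> Γ Δ D; [apply: d_Lneg (wRa _ _ D)|apply: d_Rneg (wLa _ _ D)].
- by split; [apply: weakenableL_omega => // ? ? [_ <-]|exact: weakenableR_omega].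
Qed.

Lemma der_weaken X Y Γ Δ : der Γ Δ -> der (X ++ Γ) (Y ++ Δ).
Proof.
move=> D; elim: X => [|A X IH]; last exact: (weakenable_formula A).1 _ _ IH.
by elim: Y => [|B Y IH] //; apply: (weakenable_formula B).2 _ _ IH.
Qed.

Lemma der_shared_inv ps c B s Γ Δ : shared_rule ps c ->
  c.1 ++ c.2 = [:: B] -> ~ omegaOK B -> In s ps ->
  der (c.1 ++ Γ) (c.2 ++ Δ) -> der (s.1 ++ Γ) (s.2 ++ Δ).
Proof.
move=> r cB nB sps D.
suff rep : replaceable c.1 c.2 s.1 s.2 (c.1 ++ Γ) (c.2 ++ Δ) by exact: rep.
have omega_c A : omegaOK A -> In A c.1 \/ In A c.2 -> False.
  by move=> omA /In_cat; rewrite cB => -[eBA|[]]; apply: nB; rewrite eBA.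
apply: der_replaceable D.
- by move=> p ? ? /In_cat pc; case: (omega_c (Var p) I pc).
- by move=> ? ? Bc; case: (omega_c Bot I (or_introl Bc)).
- move=> ps' A Γ' Δ' r' Ac IH Γ0 Δ0 PΓ PΔ.
  have ec := shared_rule_principalL r Ac; subst c.
  rewrite (shared_rule_functional r' r) in IH.
  have [D' _] := IH s sps; have PΓ' := Permutation_cons_inv PΓ; from_perm D'.
- move=> ps' A Γ' Δ' r' Ac IH Γ0 Δ0 PΓ PΔ.
  have ec := shared_rule_principalR r Ac; subst c.
  rewrite (shared_rule_functional r' r) in IH.
  have [D' _] := IH s sps; have PΔ' := Permutation_cons_inv PΔ; from_perm D'.
- move=> l G b Σ Ω _ _ HΣ HΩ Γ0 Δ0 PΓ PΔ; exfalso.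
  have [A [ec|ec]] := shared_rule_principal r; subst c; apply: (omega_c A).
  + exact: omegaOK_DK_context HΣ (Permutation_in _ (Permutation_sym PΓ) (or_introl erefl)).
  + by left; left.
  + by case: (Permutation_in _ (Permutation_sym PΔ) (or_introl erefl)) => [<-|/HΩ].
  + by right; left.
- move=> a Ga Γd Σ Ω _ _ _ _ HΣ HΩ Γ0 Δ0 PΓ PΔ; exfalso.
  have [A [ec|ec]] := shared_rule_principal r; subst c; apply: (omega_c A).
  + exact: omegaOK_DD_context HΣ (Permutation_in _ (Permutation_sym PΓ) (or_introl erefl)).
  + by left; left.
  + exact: HΩ (Permutation_in _ (Permutation_sym PΔ) (or_introl erefl)).
  + by right; left.
Qed.

Definition contractible X Y :=
  forall Γ Δ, der (X ++ X ++ Γ) (Y ++ Y ++ Δ) -> der (X ++ Γ) (Y ++ Δ).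

Lemma contractible_cat X1 Y1 X2 Y2 : contractible X1 Y1 -> contractible X2 Y2 ->
  contractible (X1 ++ X2) (Y1 ++ Y2).
Proof.
move=> c1 c2 Γ Δ D.
have D1 : der (X1 ++ X1 ++ X2 ++ X2 ++ Γ) (Y1 ++ Y1 ++ Y2 ++ Y2 ++ Δ) by from_perm D.
have D2 : der (X2 ++ X2 ++ X1 ++ Γ) (Y2 ++ Y2 ++ Y1 ++ Δ).
  by have D' := c1 _ _ D1; from_perm D'.
have D' := c2 _ _ D2; from_perm D'.
Qed.

Lemma contractible_shared_rule ps c B : shared_rule ps c ->
  c.1 ++ c.2 = [:: B] -> ~ omegaOK B ->
  (forall s, In s ps -> contractible s.1 s.2) -> contractible c.1 c.2.
Proof.
move=> r cB nB ctr Γ Δ D; apply: (der_shared_rule r) => s sps.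
have D1 : der (c.1 ++ s.1 ++ Γ) (c.2 ++ s.2 ++ Δ).
  by have D' := der_shared_inv r cB nB sps D; from_perm D'.
exact: ctr s sps _ _ (der_shared_inv r cB nB sps D1).
Qed.

Lemma contractibleR_omega A : omegaOK A -> contractible [::] [:: A].
Proof.
move=> omA Γ Δ D.
suff rep : replaceable [::] [:: A; A] [::] [:: A] Γ ([:: A; A] ++ Δ) by exact: rep.
apply: der_replaceable D => [p Γ' Δ' /= pA Γ0 Δ0 PΓ PΔ|? ? []|? ? ? ? _ []|||].
- have eA : A = Var p by case: pA => [|[|[]]].
  subst A; from_perm (d_init L p Γ' Δ0).
- move=> ps B ? ? r /= BA; exfalso.
  apply: (shared_rule_principalR_compound r (or_introl erefl)).
  by case: BA => [<-|[<-|[]]].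
- move=> l G b Σ Ω Dp lG HΣ HΩ Γ0 Δ0 PΓ PΔ.
  case: (Permutation_cons_cons_inv PΔ) => [[eA PΩ]|[m [PΩ PΔ0]]].
  + have D := d_DK (Ω := Δ0) Dp lG HΣ (fun f fΔ0 => HΩ f (Permutation_cons_In PΩ fΔ0)).
    subst A; from_perm D.
  + have D := d_DK (Ω := m) Dp lG HΣ (fun f fm => HΩ f (Permutation_cons_In PΩ fm)).
    from_perm D.
- move=> a Ga Γd Σ Ω LD Ga1 ne Dp HΣ HΩ Γ0 Δ0 PΓ PΔ.
  have D := d_DD (Ω := A :: Δ0) LD Ga1 ne Dp HΣ
    (fun f fΔ0 => HΩ f (Permutation_cons_In PΔ fΔ0)).
  from_perm D.
Qed.

Lemma In_boxes_subset l G H g : (forall Ha, In Ha l -> val Ha.1 \subset val G) ->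
  In (Dbox H g) (boxes l) -> val H \subset val G.
Proof. by move=> lG /in_map_iff[[H' g'] [[<- _] /lG]]. Qed.

Lemma DK_contractL A l G b Σ Ω Γ0 : omegaOK A ->
  (forall H g, A = Dbox H g -> contractible [:: g] [::]) ->
  der (map snd l) [:: b] -> (forall Ha, In Ha l -> val Ha.1 \subset val G) ->
  (forall f, In f Σ -> sigmaK G f) -> (forall f, In f Ω -> omegaOK f) ->
  Permutation (Σ ++ boxes l) (A :: A :: Γ0) -> der (A :: Γ0) (Dbox G b :: Ω).
Proof.
move=> omA ctr_g Dp lG HΣ HΩ P.
suff from_Σ : ~ In A (boxes l) -> der (A :: Γ0) (Dbox G b :: Ω).
  case: A omA ctr_g P from_Σ => [p| |? ?|? ?|? ?|?|H g] //= _ ctr_g P from_Σ;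
    try by apply: from_Σ => /in_map_iff[? []].
  case: (boolP (val H \subset val G)) => HG.
    have disj f : In f [:: Dbox H g; Dbox H g] -> ~ In f Σ.
      by case=> [<-|[<-|[]]] /HΣ /=; rewrite HG.
    have [m [Pl PΓ0]] := Permutation_app_disjoint disj P.
    have [l3 [eml Pl3]] := Permutation_map_inv _ _ (Permutation_sym Pl).
    move: PΓ0; case: l3 eml Pl3 => [|[H1 g1] [|[H2 g2] l']] //= [<- <- <- <- ->] Pl3 PΓ0.
    have Dp' : der (g :: g :: map snd l') [:: b].
      by have Psnd := Permutation_map snd Pl3; from_perm Dp.
    have lG' Ha : In Ha ((H, g) :: l') -> val Ha.1 \subset val G.
      by move=> Hal; apply: lG; apply: Permutation_in (Permutation_sym Pl3) _; right.
    have D := d_DK (l := (H, g) :: l') (ctr_g H g erefl _ _ Dp') lG' HΣ HΩ.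
    from_perm D.
  by apply: from_Σ => /(In_boxes_subset lG); apply/negP.
move=> Al.
have disj f : In f [:: A; A] -> ~ In f (boxes l) by case=> [<-|[<-|[]]].
have P' : Permutation (boxes l ++ Σ) ([:: A; A] ++ Γ0) by perm_solve.
have [m [PΣ PΓ0]] := Permutation_app_disjoint disj P'.
have D := d_DK (Σ := A :: m) Dp lG (fun f fm => HΣ f (Permutation_cons_In PΣ fm)) HΩ.
from_perm D.
Qed.

Lemma DD_contractL A a Ga Γd Σ Ω Γ0 : omegaOK A ->
  (forall H g, A = Dbox H g -> contractible [:: g] [::]) ->
  L = LKD -> val Ga = [set a] -> Γd <> [::] -> der Γd [::] ->
  (forall f, In f Σ -> sigmaD a f) -> (forall f, In f Ω -> omegaOK f) ->
  Permutation (Σ ++ map (Dbox Ga) Γd) (A :: A :: Γ0) -> der (A :: Γ0) Ω.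
Proof.
move=> omA ctr_g LD Ga1 ne Dp HΣ HΩ P.
suff from_Σ : ~ In A (map (Dbox Ga) Γd) -> der (A :: Γ0) Ω.
  case: A omA ctr_g P from_Σ => [p| |? ?|? ?|? ?|?|H g] //= _ ctr_g P from_Σ;
    try by apply: from_Σ => /in_map_iff[? []].
  case: (eqVneq H Ga) => [eHGa|HGa]; last first.
    by apply: from_Σ => /in_map_iff[? [[eH _] _]]; rewrite eH eqxx in HGa.
  subst H; have disj f : In f [:: Dbox Ga g; Dbox Ga g] -> ~ In f Σ.
    by case=> [<-|[<-|[]]] /HΣ /=; rewrite Ga1 eqxx.
  have [m [PΓd PΓ0]] := Permutation_app_disjoint disj P.
  have [l3 [eml PΓdl]] := Permutation_map_inv _ _ (Permutation_sym PΓd).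
  move: PΓ0; case: l3 eml PΓdl => [|g1 [|g2 Γ']] //= [<- <- ->] PΓdl PΓ0.
  have Dp' : der (g :: g :: Γ') [::] by from_perm Dp.
  have D := d_DD (Γ := g :: Γ') LD Ga1 ltac:(by []) (ctr_g Ga g erefl _ _ Dp') HΣ HΩ.
  from_perm D.
move=> AΓd.
have disj f : In f [:: A; A] -> ~ In f (map (Dbox Ga) Γd) by case=> [<-|[<-|[]]].
have P' : Permutation (map (Dbox Ga) Γd ++ Σ) ([:: A; A] ++ Γ0) by perm_solve.
have [m [PΣ PΓ0]] := Permutation_app_disjoint disj P'.
have D := d_DD (Σ := A :: m) LD Ga1 ne Dp
  (fun f fm => HΣ f (Permutation_cons_In PΣ fm)) HΩ.
from_perm D.
Qed.

Lemma contractibleL_omega A : omegaOK A ->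
  (forall H g, A = Dbox H g -> contractible [:: g] [::]) -> contractible [:: A] [::].
Proof.
move=> omA ctr_g Γ Δ D.
suff rep : replaceable [:: A; A] [::] [:: A] [::] ([:: A; A] ++ Γ) Δ by exact: rep.
apply: der_replaceable D
  => [p Γ' Δ' /= pA Γ0 Δ0 PΓ PΔ|Γ' Δ' /= bA Γ0 Δ0 PΓ PΔ||? ? ? ? _ []||].
- have eA : A = Var p by case: pA => [|[|[]]].
  subst A; from_perm (d_init L p Γ0 Δ').
- have eA : A = Bot by case: bA => [|[|[]]].
  subst A; from_perm (d_bot L Γ0 Δ0).
- move=> ps B Γ' Δ' r /= BA IH Γ0 Δ0 PΓ PΔ.
  have eB : B = A by case: BA => [|[|[]]].
  subst B; have [G [a [LT eA eps]]] := shared_rule_principalL_omega r (or_introl erefl) omA.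
  subst ps; have [_ rep] := IH _ (or_introl erefl).
  have PΓ' := Permutation_cons_inv PΓ.
  have D : der ([:: A] ++ a :: Γ0) ([::] ++ Δ0) by apply: rep; perm_solve.
  by subst A; apply: d_DT.
- move=> l G b Σ Ω Dp lG HΣ HΩ Γ0 Δ0 PΓ PΔ.
  have D := DK_contractL omA ctr_g Dp lG HΣ HΩ PΓ.
  from_perm D.
- move=> a Ga Γd Σ Ω LD Ga1 ne Dp HΣ HΩ Γ0 Δ0 PΓ PΔ.
  have D := DD_contractL omA ctr_g LD Ga1 ne Dp HΣ HΩ PΓ.
  from_perm D.
Qed.

Lemma contractible_formula A : contractible [:: A] [::] /\ contractible [::] [:: A].
Proof.
elim: A => [p| |a [cLa cRa] b [cLb cRb]|a [cLa cRa] b [cLb cRb]|a [cLa cRa] b [cLb cRb]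
           |a [cLa cRa]|H g [cLg _]].
- by split; [apply: contractibleL_omega => // ? ? []|exact: contractibleR_omega].
- by split; [apply: contractibleL_omega => // ? ? []|exact: contractibleR_omega].
- split; first by apply: (contractible_shared_rule (r_Land a b)) => // s [<-|[]];
                  exact: contractible_cat cLa cLb.
  by apply: (contractible_shared_rule (r_Rand a b)) => // s [<-|[<-|[]]].
- split; first by apply: (contractible_shared_rule (r_Lor a b)) => // s [<-|[<-|[]]].
  by apply: (contractible_shared_rule (r_Ror a b)) => // s [<-|[]];
    exact: contractible_cat cRa cRb.
- split; first by apply: (contractible_shared_rule (r_Limp a b)) => // s [<-|[<-|[]]].
  by apply: (contractible_shared_rule (r_Rimp a b)) => // s [<-|[]];
    exact: contractible_cat cLa cRb.
- split; first by apply: (contractible_shared_rule (r_Lneg a)) => // s [<-|[]].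
  by apply: (contractible_shared_rule (r_Rneg a)) => // s [<-|[]].
- by split; [apply: contractibleL_omega => // ? ? [_ <-]|exact: contractibleR_omega].
Qed.

Lemma der_contract X Y Γ Δ : der (X ++ X ++ Γ) (Y ++ Y ++ Δ) -> der (X ++ Γ) (Y ++ Δ).
Proof.
move: Γ Δ; elim: X => [|A X IH]; last exact: contractible_cat (contractible_formula A).1 IH.
elim: Y => [|B Y IH]; first by move=> Γ Δ.
exact: contractible_cat (contractible_formula B).2 IH.
Qed.

Lemma der_invR_And a b Γ Δ : der Γ (And a b :: Δ) -> der Γ (a :: Δ) /\ der Γ (b :: Δ).
Proof.
move=> D; split; first exact: der_shared_inv (r_Rand a b) erefl id (or_introl erefl) D.
exact: der_shared_inv (r_Rand a b) erefl id (or_intror (or_introl erefl)) D.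
Qed.

Lemma der_invL_And a b Γ Δ : der (And a b :: Γ) Δ -> der (a :: b :: Γ) Δ.
Proof. exact: der_shared_inv (r_Land a b) erefl id (or_introl erefl). Qed.

Lemma der_invR_Or a b Γ Δ : der Γ (Or a b :: Δ) -> der Γ (a :: b :: Δ).
Proof. exact: der_shared_inv (r_Ror a b) erefl id (or_introl erefl). Qed.

Lemma der_invL_Or a b Γ Δ : der (Or a b :: Γ) Δ -> der (a :: Γ) Δ /\ der (b :: Γ) Δ.
Proof.
move=> D; split; first exact: der_shared_inv (r_Lor a b) erefl id (or_introl erefl) D.
exact: der_shared_inv (r_Lor a b) erefl id (or_intror (or_introl erefl)) D.
Qed.

Lemma der_invR_Imp a b Γ Δ : der Γ (Imp a b :: Δ) -> der (a :: Γ) (b :: Δ).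
Proof. exact: der_shared_inv (r_Rimp a b) erefl id (or_introl erefl). Qed.

Lemma der_invL_Imp a b Γ Δ : der (Imp a b :: Γ) Δ -> der Γ (a :: Δ) /\ der (b :: Γ) Δ.
Proof.
move=> D; split; first exact: der_shared_inv (r_Limp a b) erefl id (or_introl erefl) D.
exact: der_shared_inv (r_Limp a b) erefl id (or_intror (or_introl erefl)) D.
Qed.

Lemma der_invR_Neg a Γ Δ : der Γ (Neg a :: Δ) -> der (a :: Γ) Δ.
Proof. exact: der_shared_inv (r_Rneg a) erefl id (or_introl erefl). Qed.

Lemma der_invL_Neg a Γ Δ : der (Neg a :: Γ) Δ -> der Γ (a :: Δ).
Proof. exact: der_shared_inv (r_Lneg a) erefl id (or_introl erefl). Qed.

Definition cut_admissible A :=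
  forall Γ Δ Γ' Δ', der Γ (A :: Δ) -> der (A :: Γ') Δ' -> der (Γ ++ Γ') (Δ ++ Δ').

Lemma der_absorb_T l Γ Δ : L = LKT ->
  der (map snd l ++ boxes l ++ Γ) Δ -> der (boxes l ++ Γ) Δ.
Proof.
move=> LT; elim: l Γ => [|[H g] l IH] Γ //= D.
have D1 : der (Dbox H g :: g :: map snd l ++ boxes l ++ Γ) Δ by from_perm D.
have D2 : der (map snd l ++ boxes l ++ Dbox H g :: Γ) Δ.
  by have D2 := d_DT LT D1; from_perm D2.
by have D3 := IH _ D2; from_perm D3.
Qed.

Lemma grp_subset_singleton H G a : val G = [set a] -> val H \subset val G -> H = G.
Proof.
move=> Ga1; rewrite Ga1 subset1 => /orP[/eqP eH|/eqP eH]; apply: val_inj.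
  by rewrite eH Ga1.
by move: (valP H); rewrite eH eqxx.
Qed.

Lemma boxes_same_group l G : (forall Ha, In Ha l -> Ha.1 = G) ->
  boxes l = map (Dbox G) (map snd l).
Proof.
elim: l => [|[H g] l IH] //= e; have /= -> := e (H, g) (or_introl erefl).
by rewrite IH // => Ha Hal; apply: e; right.
Qed.

Section PrincipalBoxCut.

Variables (l : list (grp Agt * form)) (G : grp Agt) (b : form) (Σ Ω : list form).
Hypotheses (cut_b : cut_admissible b) (Dp : der (map snd l) [:: b])
  (lG : forall Ha, In Ha l -> val Ha.1 \subset val G).
Notation rep := (replaceable [:: Dbox G b] [::] (Σ ++ boxes l) Ω).

Lemma cut_box_T ps A Γ Δ : shared_rule ps ([:: A], [::]) -> In A [:: Dbox G b] ->
  (forall s, In s ps -> rep (s.1 ++ Γ) (s.2 ++ Δ)) -> rep (A :: Γ) Δ.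
Proof.
move=> r [eA|[]] IH Γ0 Δ0 PΓ PΔ; subst A.
have [G' [a [LT [_ eba] eps]]] := shared_rule_principalL_omega r (or_introl erefl) I.
subst a ps.
have PΓ' := Permutation_cons_inv PΓ.
have D1 : der (b :: Σ ++ boxes l ++ Γ0) (Ω ++ Δ0).
  by have D1 := IH _ (or_introl erefl) (b :: Γ0) Δ0 ltac:(perm_solve) PΔ; from_perm D1.
have D2 : der (map snd l ++ boxes l ++ Σ ++ Γ0) (Ω ++ Δ0).
  by have D2 := cut_b Dp D1; from_perm D2.
by have D3 := der_absorb_T LT D2; from_perm D3.
Qed.

Lemma cut_box_DK l' H d Σ' Ω' : der (map snd l') [:: d] ->
  (forall Ha, In Ha l' -> val Ha.1 \subset val H) ->
  (forall f, In f Σ' -> sigmaK H f) -> (forall f, In f Ω' -> omegaOK f) ->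
  rep (Σ' ++ boxes l') (Dbox H d :: Ω').
Proof.
move=> Dp' lH HΣ' HΩ' Γ0 Δ0 PΓ PΔ.
have /In_cat[inΣ'|/in_map_iff[[G1 b1] [[eG eb] inl']]] :=
  Permutation_in _ (Permutation_sym PΓ) (or_introl erefl).
  have [Σ0 PΣ'] := In_Permutation_cons inΣ'.
  have D := d_DK Dp' lH (fun f fΣ0 => HΣ' f (Permutation_cons_In PΣ' fΣ0)) HΩ'.
  by have D' := der_weaken (Σ ++ boxes l) Ω D; from_perm D'.
subst G1 b1; have [l0 Pl'] := In_Permutation_cons inl'.
have Pboxes := Permutation_map (fun Ha : grp Agt * form => Dbox Ha.1 Ha.2) Pl'.
have Dp'' : der (b :: map snd l0) [:: d].
  by have Psnd := Permutation_map snd Pl'; from_perm Dp'.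
have Dc : der (map snd (l ++ l0)) [:: d].
  by rewrite map_cat_list; apply: cut_b Dp Dp''.
have GH : val G \subset val H by apply: lH (G, b) inl'.
have lH' Ha : In Ha (l ++ l0) -> val Ha.1 \subset val H.
  case/In_cat=> [/lG GaG|inl0]; first exact: subset_trans GaG GH.
  by apply: lH; apply: Permutation_cons_In Pl' inl0.
have D := d_DK Dc lH' HΣ' HΩ'.
by have D' := der_weaken Σ Ω D; from_perm D'.
Qed.

Lemma cut_box_DD a Ga Γd Σ' Ω' : L = LKD -> val Ga = [set a] -> Γd <> [::] ->
  der Γd [::] -> (forall f, In f Σ' -> sigmaD a f) -> (forall f, In f Ω' -> omegaOK f) ->
  rep (Σ' ++ map (Dbox Ga) Γd) Ω'.
Proof.
move=> LD Ga1 ne Dp' HΣ' HΩ' Γ0 Δ0 PΓ PΔ.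
have /In_cat[inΣ'|/in_map_iff[b1 [[eG eb] inΓd]]] :=
  Permutation_in _ (Permutation_sym PΓ) (or_introl erefl).
  have [Σ0 PΣ'] := In_Permutation_cons inΣ'.
  have D := d_DD LD Ga1 ne Dp' (fun f fΣ0 => HΣ' f (Permutation_cons_In PΣ' fΣ0)) HΩ'.
  by have D' := der_weaken (Σ ++ boxes l) Ω D; from_perm D'.
subst Ga b1; have [Γd0 PΓd] := In_Permutation_cons inΓd.
have Pboxes := Permutation_map (Dbox G) PΓd.
have Dp'' : der (b :: Γd0) [::] by from_perm Dp'.
have Dc : der (map snd l ++ Γd0) [::] := cut_b Dp Dp''.
have -> : boxes l = map (Dbox G) (map snd l).
  by apply: boxes_same_group => Ha /lG; apply: grp_subset_singleton Ga1.
case E: (map snd l ++ Γd0) => [|f Γ1].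
  rewrite E in Dc.
  by have D := der_weaken (Σ ++ map (Dbox G) (map snd l) ++ Γ0) (Ω ++ Δ0) Dc; from_perm D.
have D := d_DD (Γ := map snd l ++ Γd0) LD Ga1 ltac:(by rewrite E) Dc HΣ' HΩ'.
by have D' := der_weaken Σ Ω D; from_perm D'.
Qed.

Lemma cut_box_principal Γ' Δ' : der Γ' Δ' -> rep Γ' Δ'.
Proof.
apply: der_replaceable => [p ? ? [|[]]|? ? [|[]]|ps A ? ? r AGb IH|? ? ? ? _ []||].
- by [].
- by [].
- by apply: (cut_box_T r AGb) => s /IH[].
- exact: cut_box_DK.
- exact: cut_box_DD.
Qed.

End PrincipalBoxCut.

Lemma cut_admissible_omega A : omegaOK A ->
  (forall G b, A = Dbox G b -> cut_admissible b) -> cut_admissible A.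
Proof.
move=> omA cut_sub Γ Δ Γ' Δ' D1 D2.
suff rep : replaceable [::] [:: A] Γ' Δ' Γ (A :: Δ).
  by have D := rep Γ Δ (Permutation_refl _) (Permutation_refl _); from_perm D.
apply: der_replaceable D1
  => [p Γ1 Δ1 /= pA Γ0 Δ0 PΓ PΔ|? ? []|? ? ? ? _ []|ps B ? ? r /= BA _||].
- have eA : A = Var p by case: pA => [|[]].
  subst A; have PΔ' := Permutation_cons_inv PΔ.
  by have D := der_weaken Γ1 Δ0 D2; from_perm D.
- exfalso; apply: (shared_rule_principalR_compound r (or_introl erefl)).
  by case: BA => [<-|[]].
- move=> l G b Σ Ω Dp lG HΣ HΩ Γ0 Δ0 PΓ PΔ.
  case: (Permutation_cons_cons_inv PΔ) => [[eA PΩ]|[m [PΩ PΔ0]]].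
    subst A; have rep := cut_box_principal Σ Ω (cut_sub G b erefl) Dp lG D2.
    by have D := rep Γ' Δ' (Permutation_refl _) (Permutation_refl _); from_perm D.
  have D := d_DK (Ω := m) Dp lG HΣ (fun f fm => HΩ f (Permutation_cons_In PΩ fm)).
  by have D' := der_weaken Γ' Δ' D; from_perm D'.
- move=> a Ga Γd Σ Ω LD Ga1 ne Dp HΣ HΩ Γ0 Δ0 PΓ PΔ.
  have D := d_DD (Ω := Δ0) LD Ga1 ne Dp HΣ
    (fun f fΔ0 => HΩ f (Permutation_cons_In PΔ fΔ0)).
  by have D' := der_weaken Γ' Δ' D; from_perm D'.
Qed.

Lemma cut_admissible_formula A : cut_admissible A.
Proof.
elim: A => [p| |a cut_a b cut_b|a cut_a b cut_b|a cut_a b cut_b|a cut_a|H g cut_g];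
  try by apply: cut_admissible_omega => // ? ? [_ <-].
all: move=> Γ Δ Γ' Δ' D1 D2.
- have [Da Db] := der_invR_And D1.
  have Dab : der (b :: Γ ++ Γ') (Δ ++ Δ').
    by have D := cut_a _ _ _ _ Da (der_invL_And D2); from_perm D.
  exact: der_contract (cut_b _ _ _ _ Db Dab).
- have [Da Db] := der_invL_Or D2.
  have Dab : der (Γ ++ Γ') (b :: Δ ++ Δ') := cut_a _ _ _ _ (der_invR_Or D1) Da.
  have D := cut_b _ _ _ _ Dab Db.
  have D' : der (Γ' ++ Γ' ++ Γ) (Δ' ++ Δ' ++ Δ) by from_perm D.
  by have D'' := der_contract D'; from_perm D''.
- have [Da Db] := der_invL_Imp D2.
  have Dab : der (Γ' ++ Γ) (b :: Δ' ++ Δ).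
    by have D := cut_a _ _ _ _ Da (der_invR_Imp D1); from_perm D.
  have D := cut_b _ _ _ _ Dab Db.
  have D' : der (Γ' ++ Γ' ++ Γ) (Δ' ++ Δ' ++ Δ) by from_perm D.
  by have D'' := der_contract D'; from_perm D''.
- by have D := cut_a _ _ _ _ (der_invL_Neg D2) (der_invR_Neg D1); from_perm D.
Qed.

End Cut.

Theorem proposition3p11 (V : countType) (Agt : finType) (hAgt : 0 < #|Agt|)
  (L : logic) (Γ Δ Γ' Δ' : list (form V Agt)) (λ : form V Agt) :
  derivable L Γ (Δ ++ [:: λ]) ->
  derivable L (λ :: Γ') Δ' ->
  derivable L (Γ ++ Γ') (Δ ++ Δ').
Proof.
move=> D1 D2; apply: (cut_admissible_formula _ D2).
exact: d_perm (Permutation_refl Γ) (Permutation_sym (Permutation_cons_append Δ λ)) D1.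
Qed.
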